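(* Let $T$ be a tabloid whose $k$-th and $(k+1)$-st rows have the same size $m$. Then $\operatorname{lch}^o_k(T)=\operatorname{lch}_k(T)$ for every activation ordering $o$.
   Context: Fix $n\ge1$; $\overline i=i+n\mathbb Z$, $[\overline n]=\{\overline1,\dots,\overline n\}$. A tabloid is a sequence of pairwise disjoint subsets (rows) $T_1,T_2,\dots$ of $[\overline n]$. Broken order: $\overline1<\overline2<\dots<\overline n$. An activation ordering for rows $k,k+1$ is a bijection $o:[m]\to T_k$. The charge matching with ordering $o$: for $t=1,\dots,m$ in turn, match $o(t)$ with the smallest (broken order) not yet matched element of $T_{k+1}$ that is larger than $o(t)$, if one exists; otherwise with the smallest not yet matched element of $T_{k+1}$. $\operatorname{lch}^o_k(T)$ is the number of elements $\overline a\in T_k$ matched with some $\overline b$ satisfying $\overline a>\overline b$ (broken order). $\operatorname{lch}_k(T)$ denotes $\operatorname{lch}^{o}_k(T)$ for the standard ordering $o$, which lists $T_k$ in increasing broken order. *)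

From mathcomp Require Import all_boot.
Set Implicit Arguments. Unset Strict Implicit. Unset Printing Implicit Defensive.

(* Convention: [n-bar] = {1-bar,...,n-bar} is represented by 'I_n, the residue
   i-bar (1 <= i <= n) being the ordinal i-1.  The broken order
   1-bar < 2-bar < ... < n-bar is then the usual order on 'I_n.
   A tabloid is a (finite) sequence of rows T_1, T_2, ... ; row T_(j+1) is
   [row T j] (0-based indexing in the seq; rows beyond the end are empty). *)

Definition row n (T : seq {set 'I_n}) (j : nat) : {set 'I_n} := nth set0 T j.

Definition is_tabloid n (T : seq {set 'I_n}) : Prop :=
  forall i j, i != j -> [disjoint row T i & row T j].

Definition sorted_enum n (A : {set 'I_n}) : seq 'I_n :=
  sort (fun x y : 'I_n => x <= y) (enum A).

Definition partner n (a : 'I_n) (U : seq 'I_n) (u0 : 'I_n) : 'I_n :=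
  if has (fun b : 'I_n => a < b) U
  then nth u0 U (find (fun b : 'I_n => a < b) U)
  else head u0 U.

(* Processes the activated elements in order; U = sorted list of unmatched
   elements of the next row.  Counts the elements a matched with some b < a. *)
Fixpoint lch_run n (As : seq 'I_n) (U : seq 'I_n) : nat :=
  match As with
  | [::] => 0
  | a :: r =>
      match U with
      | [::] => 0
      | u0 :: _ =>
          let b := partner a U u0 in
          (b < a) + lch_run r (rem b U)
      end
  end.

(* lch^o_k(T) for an activation ordering o : 'I_m -> T_k (k is 0-based here:
   rows [row T k] and [row T k.+1]). *)
Definition lch_o n (T : seq {set 'I_n}) (k m : nat) (o : 'I_m -> 'I_n) : nat :=
  lch_run [seq o t | t <- enum 'I_m] (sorted_enum (row T k.+1)).

Definition lch n (T : seq {set 'I_n}) (k : nat) : nat :=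
  lch_run (sorted_enum (row T k)) (sorted_enum (row T k.+1)).

From mathcomp Require Import all_boot zify.
Set Implicit Arguments. Unset Strict Implicit. Unset Printing Implicit Defensive.

(* Read [partner a U] as the first element of [U] met when walking cyclically
   upwards from [a]; the pair then counts in lch exactly when this walk wraps
   around from n-bar to 1-bar.  It is enough to show that two consecutive
   activations a, a' can be swapped.  If their partners differ, each keeps its
   partner once the other one is matched.  If both want the same b, the second
   one to be activated gets the cyclic successor c of b, and its walk to c
   passes through b, so that [c < a] = [b < a] + [c < b]; the total count is
   then symmetric in a and a'.  The size hypothesis ensures that no activation
   is left unmatched, which is what could make the order matter. *)

Lemma rem_neq_nil (T : eqType) (x : T) (s : seq T) :
  x \in s -> 1 < size s -> rem x s != [::].
Proof. by move=> xs; rewrite -size_eq0 size_rem //; case: (size s) => [|[]]. Qed.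

Lemma remC (T : eqType) (x y : T) (s : seq T) :
  uniq s -> rem x (rem y s) = rem y (rem x s).
Proof.
move=> us; rewrite ![rem _ s]rem_filter // !rem_filter ?filter_uniq //.
by rewrite -!filter_predI; apply: eq_filter => z /=; rewrite andbC.
Qed.

Section CyclicMatching.
Variable n : nat.
Implicit Types (a b c x : 'I_n) (As Bs U : seq 'I_n).

Definition cyc_between a x b : bool :=
  if a < b then (a < x) && (x < b) else (a < x) || (x < b).

Definition is_cyc_next a U b : Prop :=
  b \in U /\ {in U, forall x, ~~ cyc_between a x b}.

Definition cyc_next a U : 'I_n := partner a U a.

Notation sorted_lt := (sorted (fun x y : 'I_n => x < y)).

Lemma sorted_lt_uniq_le U :
  sorted_lt U = uniq U && sorted (fun x y : 'I_n => x <= y) U.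
Proof.
have := ltn_sorted_uniq_leq (map val U).
by rewrite (map_inj_uniq val_inj) !sorted_map.
Qed.

Lemma sorted_lt_uniq U : sorted_lt U -> uniq U.
Proof. by rewrite sorted_lt_uniq_le => /andP[]. Qed.

Lemma sorted_lt_rem b U : sorted_lt U -> sorted_lt (rem b U).
Proof.
move=> sU; rewrite rem_filter ?sorted_lt_uniq //.
by apply: sorted_filter => // x y z; apply: ltn_trans.
Qed.

Lemma cyc_wrap_split a b c : c != a -> ~~ cyc_between a c b ->
  (c < a) = (b < a) + (c < b) :> nat.
Proof. by rewrite /cyc_between -(inj_eq val_inj) /=; case: ifP; lia. Qed.

Lemma is_cyc_next_unique a U b b' :
  is_cyc_next a U b -> is_cyc_next a U b' -> b = b'.
Proof.
move=> [bU /(_ b') hb] [b'U /(_ b) hb']; apply: ord_inj.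
move: (hb b'U) (hb' bU); rewrite /cyc_between; do 2 case: ifP; lia.
Qed.

Lemma is_cyc_next_sub a U V b : {subset V <= U} -> b \in V ->
  is_cyc_next a U b -> is_cyc_next a V b.
Proof. by move=> VU bV [_ hb]; split=> // x /VU; apply: hb. Qed.

Lemma partner_default a U u0 : U != [::] -> partner a U u0 = cyc_next a U.
Proof.
rewrite /cyc_next /partner; case: ifP => [hU _|_]; last by case: U.
by apply: set_nth_default; rewrite -has_find.
Qed.

Lemma cyc_nextP a U : sorted_lt U -> U != [::] -> is_cyc_next a U (cyc_next a U).
Proof.
rewrite sorted_lt_uniq_le => /andP[_ sU] U0.
have le_trans : transitive (fun x y : 'I_n => x <= y).
  by move=> y x z; apply: leq_trans.
rewrite /cyc_next /partner; case: ifP => hasU.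
  set i := find _ U; have iU : i < size U by rewrite -has_find.
  have a_lt : a < nth a U i := nth_find a hasU.
  split=> [|x xU]; first exact: mem_nth.
  have jU : index x U < size U by rewrite index_mem.
  have nth_x : nth a U (index x U) = x by rewrite nth_index.
  have [ji|ij] := ltnP (index x U) i.
    have := before_find a ji; rewrite nth_x /cyc_between a_lt /=; lia.
  have := sorted_leq_nth le_trans (fun x : 'I_n => leqnn x) a sU.
  move=> /(_ i (index x U) iU jU ij).
  by rewrite nth_x /cyc_between a_lt /=; lia.
case: U sU U0 hasU => [//|u U] /= sU _ /negbT.
rewrite negb_or => /andP[au /hasPn aU].
have u_min : all (fun y : 'I_n => u <= y) U := order_path_min le_trans sU.
split=> [|x]; first exact: mem_head.
rewrite inE /cyc_between => /predU1P[-> | xU]; move: au; first by case: ifP; lia.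
by move: (allP u_min x xU) (aU x xU); case: ifP; lia.
Qed.

Lemma lch_run_cons a As U : U != [::] ->
  lch_run (a :: As) U = (cyc_next a U < a) + lch_run As (rem (cyc_next a U) U).
Proof. by case: U => //= u U _; rewrite partner_default. Qed.

Lemma cyc_next_after_rem a U b c : uniq U -> a \notin U ->
  is_cyc_next a U b -> is_cyc_next a (rem b U) c -> is_cyc_next b (rem b U) c.
Proof.
move=> uU aU [bU hb] [cV hc]; split=> // x xV.
have cU := mem_rem cV; have xU := mem_rem xV.
have cb : c != b by move: cV; rewrite mem_rem_uniq // inE => /andP[].
have [ac ax ab] : [/\ a != c, a != x & a != b].
  by split; apply: contraNneq aU => ->.
move: (hb x xU) (hb c cU) (hc x xV) cb ac ax ab.
rewrite /cyc_between -!(inj_eq val_inj) /=; do 3 case: ifP; lia.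
Qed.

Lemma cyc_next_rem a U b : sorted_lt U -> U != [::] -> cyc_next a U != b ->
  cyc_next a (rem b U) = cyc_next a U.
Proof.
move=> sU U0 neq_b.
have b'V : cyc_next a U \in rem b U by rewrite rem_mem ?(cyc_nextP a sU U0).1.
have V0 : rem b U != [::] by apply: contraTneq b'V => ->.
apply: is_cyc_next_unique (cyc_nextP a (sorted_lt_rem b sU) V0) _.
by apply: is_cyc_next_sub (@mem_rem _ _ _) b'V _; apply: cyc_nextP.
Qed.

Lemma cyc_next_rem_next a U b : sorted_lt U -> a \notin U -> 1 < size U ->
  cyc_next a U = b -> cyc_next a (rem b U) = cyc_next b (rem b U).
Proof.
move=> sU aU U2 <-; have U0 : U != [::] by rewrite -size_eq0 -lt0n ltnW.
have V0 := rem_neq_nil (cyc_nextP a sU U0).1 U2.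
have sV := sorted_lt_rem (cyc_next a U) sU.
apply: is_cyc_next_unique (cyc_nextP _ sV V0).
apply: cyc_next_after_rem (sorted_lt_uniq sU) aU (cyc_nextP a sU U0) _.
exact: cyc_nextP.
Qed.

Lemma lch_run_swap a a' As U : sorted_lt U -> a \notin U -> a' \notin U ->
  1 < size U -> lch_run [:: a, a' & As] U = lch_run [:: a', a & As] U.
Proof.
move=> sU aU a'U U2.
have U0 : U != [::] by rewrite -size_eq0 -lt0n ltnW.
have [bU hb] := cyc_nextP a sU U0; have [b'U hb'] := cyc_nextP a' sU U0.
rewrite !lch_run_cons ?rem_neq_nil //.
have [eq_bb'|neq_bb'] := eqVneq (cyc_next a U) (cyc_next a' U); last first.
  rewrite !cyc_next_rem // 1?eq_sym // remC ?sorted_lt_uniq //.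
  by rewrite !addnA [(_ < a') + _]addnC.
rewrite -eq_bb' in hb' *.
rewrite (cyc_next_rem_next sU a'U U2 (esym eq_bb')).
rewrite (cyc_next_rem_next sU aU U2 erefl).
set b := cyc_next a U in bU hb hb' *; set c := cyc_next b (rem b U).
have cU : c \in U.
  exact/mem_rem/(cyc_nextP b (sorted_lt_rem b sU) (rem_neq_nil bU U2)).1.
have [ca ca'] : c != a /\ c != a' by split; apply: contraTneq cU => ->.
rewrite !addnA; congr (_ + _).
by rewrite (cyc_wrap_split ca (hb c cU)) (cyc_wrap_split ca' (hb' c cU)) addnCA.
Qed.

Definition admissible As U : bool :=
  [&& sorted_lt U, all (fun x => x \notin U) As & size As <= size U].

Lemma admissible_cons a As U : admissible (a :: As) U ->
  U != [::] /\ admissible As (rem (cyc_next a U) U).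
Proof.
case/and3P=> sU /andP[aU AsU] szU.
have U0 : U != [::] by rewrite -size_eq0 -lt0n (leq_trans _ szU).
have [bU _] := cyc_nextP a sU U0.
split=> //; apply/and3P; split; first exact: sorted_lt_rem.
  by apply/allP=> x /(allP AsU); apply: contra; apply: mem_rem.
by rewrite size_rem //; case: (size U) szU.
Qed.

Lemma admissible_perm As Bs U : perm_eq As Bs -> admissible As U = admissible Bs U.
Proof. by move=> pAB; rewrite /admissible (perm_all _ pAB) (perm_size pAB). Qed.

Lemma lch_run_move_front a As Bs U : admissible (As ++ a :: Bs) U ->
  lch_run (As ++ a :: Bs) U = lch_run (a :: As ++ Bs) U.
Proof.
elim: As U => [//|x As IH] U adm.
have [U0 adm'] := admissible_cons (adm : admissible (x :: As ++ a :: Bs) U).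
rewrite cat_cons lch_run_cons // IH // -lch_run_cons //.
case/and3P: adm => sU /andP[xU AsU] szU.
apply: lch_run_swap => //; last by move: szU; rewrite /= size_cat /=; lia.
by apply: (allP AsU); rewrite mem_cat mem_head orbT.
Qed.

Lemma lch_run_perm As Bs U : perm_eq As Bs -> admissible As U ->
  lch_run As U = lch_run Bs U.
Proof.
elim: As Bs U => [|a As IH] Bs U pAB adm.
  by move: pAB; rewrite perm_sym => /perm_nilP ->.
have aBs : a \in Bs by rewrite -(perm_mem pAB) mem_head.
case/splitPr: aBs pAB => B1 B2 pAB.
rewrite lch_run_move_front -?(admissible_perm _ pAB) //.
have [U0 adm'] := admissible_cons adm.
rewrite !lch_run_cons //; congr (_ + _); apply: IH adm'.
by rewrite -(perm_cons a) (perm_trans pAB) // (perm_catCA B1 [:: a] B2).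
Qed.

End CyclicMatching.

Theorem lemma5p5 (n : nat) (T : seq {set 'I_n}) (k m : nat) :
  0 < n -> is_tabloid T ->
  #|row T k| = m -> #|row T k.+1| = m ->
  forall o : 'I_m -> 'I_n,
    injective o -> [set o t | t : 'I_m] = row T k ->
    lch_o T k o = lch T k.
Proof.
move=> _ hT _ hB o o_inj o_onto.
have disj := hT k k.+1 (negbT (ltn_eqF (ltnSn k))).
have mem_o x : (x \in [seq o t | t <- enum 'I_m]) = (x \in row T k).
  by rewrite -o_onto; apply/mapP/imsetP=> -[t _ ->]; exists t; rewrite ?mem_enum.
rewrite /lch_o /lch; apply: lch_run_perm.
  apply: uniq_perm => [||x]; last by rewrite mem_o mem_sort mem_enum.
    by rewrite (map_inj_uniq o_inj) enum_uniq.
  by rewrite sort_uniq enum_uniq.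
apply/and3P; split.
- rewrite sorted_lt_uniq_le sort_uniq enum_uniq.
  by apply: sort_sorted => x y; apply: leq_total.
- by apply/allP=> x; rewrite mem_o mem_sort mem_enum => /(disjointFr disj) ->.
- by rewrite size_map size_enum_ord size_sort -cardE hB.
Qed.
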